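(* The bounds $LB$ and $UB$ converge to the continuous Erlang-C function uniformly in the safety factor: $$\lim_{\lambda\to\infty}\sup_{\beta>0}\big[\tilde\alpha(\beta,\lambda)-LB(\beta,\lambda)\big]=0,\qquad \lim_{\lambda\to\infty}\sup_{\beta>0}\big[UB(\beta,\lambda)-\tilde\alpha(\beta,\lambda)\big]=0.$$
   Context: $\phi,\Phi$ are the standard normal density and distribution function. For $\lambda>0$ and real $n\ge 0$, the continuous Erlang-C function is $\bar\alpha(n,\lambda)=\min\Big\{1,\big[\lambda\int_0^\infty t e^{-\lambda t}(1+t)^{n-1}\,dt\big]^{-1}\Big\}$ (for $n\ge\lambda$ the minimum is attained by the second term; for integer $n>\lambda$ it equals the Erlang-C probability that an arriving customer waits in an $M/M/n$ queue with arrival rate $\lambda$ and service rate 1). Set $\tilde\alpha(\beta,\lambda)=\bar\alpha(\lambda+\beta\sqrt\lambda,\lambda)$ for $\beta\ge0$. For $\lambda>0,\beta\ge 0$ set $n=\lambda+\beta\sqrt{\lambda}$, $\rho=\lambda/n$, $a=\sqrt{-2n(1-\rho+\ln\rho)}$, $\gamma=(n-\lambda)/\sqrt{n}$, and $UB(\beta,\lambda)=\left[\rho+\gamma\left(\frac{\Phi(a)}{\phi(a)}+\frac{2}{3\sqrt{n}}\right)\right]^{-1}$, $LB(\beta,\lambda)=\left[\rho+\gamma\left(\frac{\Phi(a)}{\phi(a)}+\frac{2}{3\sqrt{n}}+\frac{1}{\phi(a)(12n-1)}\right)\right]^{-1}$. It is known (Janssen, van Leeuwaarden and Zwart) that $LB(\beta,\lambda)\le\tilde\alpha(\beta,\lambda)\le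 UB(\beta,\lambda)$ for all $\lambda>0$, $\beta>0$. *)

From Stdlib Require Import Reals Lra ClassicalEpsilon.
Open Scope R_scope.

Definition improper_int_0_inf (f : R -> R) (l : R) : Prop :=
  forall eps, eps > 0 -> exists M, forall b, b > M ->
    exists pr : Riemann_integrable f 0 b, Rabs (RiemannInt pr - l) < eps.

Definition improper_int_minf (f : R -> R) (a l : R) : Prop :=
  forall eps, eps > 0 -> exists M, forall c, c < - M ->
    exists pr : Riemann_integrable f c a, Rabs (RiemannInt pr - l) < eps.

Definition phi (x : R) : R := exp (- (x ^ 2) / 2) / sqrt (2 * PI).

Definition Phi (a : R) : R :=
  epsilon (inhabits 0) (fun l => improper_int_minf phi a l).

Definition erlang_integral (n lam : R) : R :=
  epsilon (inhabits 0) (fun l =>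
    improper_int_0_inf (fun t => t * exp (- lam * t) * Rpower (1 + t) (n - 1)) l).

Definition alpha_bar (n lam : R) : R :=
  Rmin 1 (/ (lam * erlang_integral n lam)).

Definition alpha_tilde (beta lam : R) : R :=
  alpha_bar (lam + beta * sqrt lam) lam.

Definition n_of (beta lam : R) : R := lam + beta * sqrt lam.
Definition rho_of (beta lam : R) : R := lam / n_of beta lam.
Definition a_of (beta lam : R) : R :=
  sqrt (- 2 * n_of beta lam * (1 - rho_of beta lam + ln (rho_of beta lam))).
Definition gamma_of (beta lam : R) : R :=
  (n_of beta lam - lam) / sqrt (n_of beta lam).

Definition UB (beta lam : R) : R :=
  / (rho_of beta lam + gamma_of beta lam *
       (Phi (a_of beta lam) / phi (a_of beta lam) + 2 / (3 * sqrt (n_of beta lam)))).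

Definition LB (beta lam : R) : R :=
  / (rho_of beta lam + gamma_of beta lam *
       (Phi (a_of beta lam) / phi (a_of beta lam) + 2 / (3 * sqrt (n_of beta lam))
        + 1 / (phi (a_of beta lam) * (12 * n_of beta lam - 1)))).

(* lim_{lam -> oo} sup_{beta > 0} f beta lam = 0, written out:
   for every eps > 0 there is L such that for lam > L the supremum lies in
   [-eps, eps], i.e. every value is <= eps and some value is >= -eps. *)
Definition uniform_sup_limit_zero (f : R -> R -> R) : Prop :=
  forall eps, eps > 0 -> exists L, forall lam, lam > L ->
    (forall beta, beta > 0 -> f beta lam <= eps) /\
    (exists beta, beta > 0 /\ - eps <= f beta lam).

From Stdlib Require Import Reals Lra Psatz ClassicalEpsilon Classical.
From Coquelicot Require Import Coquelicot.
Open Scope R_scope.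

(* Fix 0 < lam < n and put kappa(t) = -lam t + n ln(1+t), so that the Erlang
   integrand is t/(1+t) e^{kappa(t)}.  kappa is maximal at t_max = n/lam - 1,
   with value kappa_max = a^2/2 where a = a_of is the paper's quantity.  The
   substitution kappa_max - kappa(t) = w(t)^2/2 would turn the integral into a
   Gaussian one; rather than performing it, we compare derivatives: with
   gamma = (n - lam)/sqrt n, the function
       1 - e^{kappa(t)} + gamma e^{kappa_max} int_{+-w(t)}^a e^{-s^2/2} ds
   has a derivative within relative error 1/sqrt n of that of lam int_0^t,
   by an elementary estimate on x - 1 - ln x.  Letting t -> oo gives
       |lam * erlang_integral - (1 + gamma e^{kappa_max} l)|
          <= 2 gamma e^{kappa_max} / sqrt n,      l = sqrt(2 pi) Phi(a).
   Hence alpha_tilde (up to truncation at 1), UB and LB are reciprocals of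
   numbers within relative distance 4/sqrt n of 1 + gamma e^{kappa_max} l, so
   they are within 16/sqrt lam of each other for every beta > 0 once
   lam >= 64, and the theorem follows. *)

Lemma exp_le_compat x y : x <= y -> exp x <= exp y.
Proof. intros [H| ->]; [left; now apply exp_increasing | lra]. Qed.

Lemma continuity_of_derive f x l : is_derive f x l -> continuity_pt f x.
Proof.
  intros H. apply continuity_pt_filterlim.
  apply (@ex_derive_continuous R_AbsRing R_NormedModule). now exists l.
Qed.

Lemma nonneg_derive_le (f df : R -> R) a b : a <= b ->
  (forall x, a < x < b -> is_derive f x (df x)) ->
  (forall x, a < x < b -> 0 <= df x) ->
  (forall x, a <= x <= b -> continuity_pt f x) -> f a <= f b.
Proof.
  intros Hab Hd Hp Hc.
  destruct (Req_dec a b) as [-> | Hne]; [lra|].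
  assert (pr1 : forall c, a < c < b -> derivable_pt f c).
  { intros c Hc'. exists (df c). apply is_derive_Reals. now apply Hd. }
  assert (pr2 : forall c, a < c < b -> derivable_pt id c).
  { intros c _. apply derivable_pt_id. }
  destruct (MVT f id a b pr1 pr2) as [c [P HP]]; try lra; auto.
  { intros c _. apply derivable_continuous_pt, derivable_pt_id. }
  rewrite (derive_pt_eq_0 f c (df c) (pr1 c P)) in HP
    by (apply is_derive_Reals; now apply Hd).
  rewrite (derive_pt_eq_0 id c 1 (pr2 c P)) in HP by apply derivable_pt_lim_id.
  unfold id in HP. specialize (Hp c P). nra.
Qed.

Lemma dominated_increment (D K dD dK : R -> R) a b : a <= b ->
  (forall x, a < x < b -> is_derive D x (dD x)) ->
  (forall x, a < x < b -> is_derive K x (dK x)) ->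
  (forall x, a < x < b -> Rabs (dD x) <= dK x) ->
  (forall x, a <= x <= b -> continuity_pt D x) ->
  (forall x, a <= x <= b -> continuity_pt K x) ->
  Rabs (D b - D a) <= K b - K a.
Proof.
  intros Hab HD HK Hb CD CK.
  assert (K a - D a <= K b - D b).
  { apply (nonneg_derive_le (fun x => K x - D x) (fun x => dK x - dD x)); auto.
    - intros x Hx. apply (is_derive_minus K D); auto.
    - intros x Hx. specialize (Hb x Hx). apply Rabs_le_between in Hb. lra.
    - intros x Hx. apply continuity_pt_minus; auto. }
  assert (K a + D a <= K b + D b).
  { apply (nonneg_derive_le (fun x => K x + D x) (fun x => dK x + dD x)); auto.
    - intros x Hx. apply (is_derive_plus K D); auto.
    - intros x Hx. specialize (Hb x Hx). apply Rabs_le_between in Hb. lra.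
    - intros x Hx. apply continuity_pt_plus; auto. }
  apply Rabs_le. lra.
Qed.

Lemma increasing_sign (f df : R -> R) c x :
  (forall y, 0 < y -> is_derive f y (df y)) -> (forall y, 0 < y -> 0 <= df y) ->
  0 < c -> 0 < x -> f c = 0 -> 0 <= (x - c) * f x.
Proof.
  intros Hd Hp Hc Hx Hfc.
  assert (Hmono : forall u v, 0 < u <= v -> f u <= f v).
  { intros u v Huv. apply (nonneg_derive_le f df); try lra.
    - intros y Hy. apply Hd. lra.
    - intros y Hy. apply Hp. lra.
    - intros y Hy. eapply continuity_of_derive, Hd. lra. }
  destruct (Rle_dec c x).
  - assert (f c <= f x) by (apply Hmono; lra). nra.
  - assert (f x <= f c) by (apply Hmono; lra). nra.
Qed.

Lemma monotone_bounded_limit (f : R -> R) (A B : R) :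
  (forall x y, A <= x <= y -> f x <= f y) -> (forall x, A <= x -> f x <= B) ->
  exists l, (forall x, A <= x -> f x <= l) /\ l <= B /\
    (forall eps, eps > 0 -> exists M, forall x, x > M -> Rabs (f x - l) < eps).
Proof.
  intros Hm Hb.
  set (E := fun y => exists x, A <= x /\ y = f x).
  destruct (completeness E) as [l [Hub Hlub]].
  { exists B. intros y [x [Hx ->]]. now apply Hb. }
  { exists (f A), A. split; lra. }
  exists l. split; [|split].
  - intros x Hx. apply Hub. now exists x.
  - apply Hlub. intros y [x [Hx ->]]. now apply Hb.
  - intros eps Heps.
    destruct (classic (exists x, A <= x /\ l - eps < f x)) as [[x [Hx Hfx]]|Hn].
    + exists x. intros y Hy.
      assert (f x <= f y) by (apply Hm; lra).
      assert (f y <= l) by (apply Hub; exists y; split; [lra|auto]).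
      apply Rabs_lt_between. lra.
    + assert (l <= l - eps); [|lra].
      apply Hlub. intros y [x [Hx ->]].
      apply Rnot_lt_le. intros Hlt. apply Hn. exists x. split; auto.
Qed.

Lemma eq_of_common_approx l1 l2 :
  (forall eps, eps > 0 -> exists x, Rabs (x - l1) < eps /\ Rabs (x - l2) < eps) -> l1 = l2.
Proof.
  intros H. destruct (Req_dec l1 l2) as [|Hne]; auto.
  assert (Hd : 0 < Rabs (l1 - l2)) by (apply Rabs_pos_lt; lra).
  destruct (H (Rabs (l1 - l2) / 2)) as [x [H1 H2]]; [lra|].
  assert (Rabs (l1 - l2) <= Rabs (x - l2) + Rabs (x - l1)).
  { replace (l1 - l2) with ((x - l2) - (x - l1)) by ring.
    eapply Rle_trans; [apply Rabs_triang|]. rewrite Rabs_Ropp. lra. }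
  lra.
Qed.

(* Improper integrals over [0,oo) and (-oo,a] are unique; this pins down the
   values chosen by epsilon in erlang_integral and Phi. *)
Lemma improper_int_0_inf_unique f l1 l2 :
  improper_int_0_inf f l1 -> improper_int_0_inf f l2 -> l1 = l2.
Proof.
  intros H1 H2. apply eq_of_common_approx. intros eps He.
  destruct (H1 eps He) as [M1 HM1], (H2 eps He) as [M2 HM2].
  destruct (HM1 (Rmax M1 M2 + 1)) as [p1 Hp1]; [pose proof (Rmax_l M1 M2); lra|].
  destruct (HM2 (Rmax M1 M2 + 1)) as [p2 Hp2]; [pose proof (Rmax_r M1 M2); lra|].
  rewrite (RiemannInt_P5 p1 p2) in Hp1. eauto.
Qed.

Lemma improper_int_minf_unique f a l1 l2 :
  improper_int_minf f a l1 -> improper_int_minf f a l2 -> l1 = l2.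
Proof.
  intros H1 H2. apply eq_of_common_approx. intros eps He.
  destruct (H1 eps He) as [M1 HM1], (H2 eps He) as [M2 HM2].
  destruct (HM1 (- Rmax M1 M2 - 1)) as [p1 Hp1]; [pose proof (Rmax_l M1 M2); lra|].
  destruct (HM2 (- Rmax M1 M2 - 1)) as [p2 Hp2]; [pose proof (Rmax_r M1 M2); lra|].
  rewrite (RiemannInt_P5 p1 p2) in Hp1. eauto.
Qed.

Definition gauss (s : R) : R := exp (- (s ^ 2) / 2).

Lemma gauss_pos s : 0 < gauss s.
Proof. apply exp_pos. Qed.

Lemma gauss_sign s z : s * s = 1 -> gauss (s * z) = gauss z.
Proof.
  intros Hs. unfold gauss.
  now replace ((s * z) ^ 2) with ((s * s) * z ^ 2) by ring; rewrite Hs, Rmult_1_l.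
Qed.

Lemma gauss_continuous s : continuous gauss s.
Proof.
  apply (@ex_derive_continuous R_AbsRing R_NormedModule). unfold gauss. auto_derive. auto.
Qed.

Lemma gauss_integrable c d : ex_RInt gauss c d.
Proof. apply (@ex_RInt_continuous R_CompleteNormedModule). intros; apply gauss_continuous. Qed.

Lemma gauss_chasles c d e : RInt gauss c d + RInt gauss d e = RInt gauss c e.
Proof. apply (RInt_Chasles gauss); apply gauss_integrable. Qed.

Lemma gauss_int_nonneg c d : c <= d -> 0 <= RInt gauss c d.
Proof.
  intros; apply RInt_ge_0; auto. apply gauss_integrable. intros; left; apply gauss_pos.
Qed.

Lemma gauss_int_derive a c : is_derive (fun c => RInt gauss c a) c (- gauss c).
Proof.
  apply (is_derive_RInt' gauss (fun c => RInt gauss c a) c a).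
  - exists (mkposreal 1 Rlt_0_1). intros y _.
    apply (RInt_correct (V:=R_CompleteNormedModule)), gauss_integrable.
  - apply gauss_continuous.
Qed.

(* e^{-s^2/2} <= e^{1/2} e^s gives a bound on the integrals over (c,a]
   that is uniform in c, so the improper integral exists. *)
Lemma gauss_int_le_exp c a : c <= a -> RInt gauss c a <= exp (1/2) * exp a.
Proof.
  intros Hca.
  assert (Hd : forall x, is_derive (fun x => exp (1/2) * exp x) x (exp (1/2) * exp x))
    by (intros x; auto_derive; auto; ring).
  assert (Hi : is_RInt (fun x => exp (1/2) * exp x) c a
                 (exp (1/2) * exp a - exp (1/2) * exp c)).
  { apply (is_RInt_derive (fun x => exp (1/2) * exp x)); [intros; apply Hd|].
    intros x _. apply (@ex_derive_continuous R_AbsRing R_NormedModule). eexists; apply Hd. }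
  apply Rle_trans with (RInt (fun x => exp (1/2) * exp x) c a).
  - apply RInt_le; auto. apply gauss_integrable. eexists; exact Hi.
    intros z _. unfold gauss. rewrite <- exp_plus. apply exp_le_compat.
    pose proof (pow2_ge_0 (z + 1)). lra.
  - rewrite (is_RInt_unique _ _ _ _ Hi).
    assert (0 < exp (1/2) * exp c) by (apply Rmult_lt_0_compat; apply exp_pos). lra.
Qed.

(* l is the Gaussian integral over (-oo,a], that is sqrt(2 pi) Phi(a); we also
   record that it dominates the integrals over [c,a]. *)
Definition gauss_tail (a l : R) : Prop :=
  (forall c, c <= a -> RInt gauss c a <= l) /\
  (forall eps, eps > 0 -> exists M, forall c, c < - M -> Rabs (RInt gauss c a - l) < eps).

(* The tail integral exists: c |-> int_c^a gauss increases as c -> -oo and is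
   bounded by gauss_int_le_exp. *)
Lemma gauss_tail_exists a : exists l, gauss_tail a l.
Proof.
  destruct (monotone_bounded_limit (fun y => RInt gauss (- y) a) (- a) (exp (1/2) * exp a))
    as [l [H1 [_ H3]]].
  - intros x y Hxy. rewrite <- (gauss_chasles (- y) (- x) a).
    assert (0 <= RInt gauss (- y) (- x)) by (apply gauss_int_nonneg; lra). lra.
  - intros x Hx. apply gauss_int_le_exp. lra.
  - exists l. split.
    + intros c Hc. rewrite <- (Ropp_involutive c). apply H1. lra.
    + intros eps He. destruct (H3 eps He) as [M HM]. exists M.
      intros c Hc. rewrite <- (Ropp_involutive c). apply HM. lra.
Qed.

(* For a >= 0 the tail integral is at least the integral over [-1,0], which
   exceeds e^{-1/2} > 1/2. *)
Lemma gauss_tail_ge_half a l : 0 <= a -> gauss_tail a l -> 1/2 <= l.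
Proof.
  intros Ha [Hle _].
  assert (Hsplit := gauss_chasles (-1) 0 a).
  assert (0 <= RInt gauss 0 a) by (apply gauss_int_nonneg; lra).
  assert (Hlow : exp (-1/2) <= RInt gauss (-1) 0).
  { replace (exp (-1/2)) with (RInt (fun _ => exp (-1/2)) (-1) 0).
    - apply RInt_le; try lra. apply ex_RInt_const. apply gauss_integrable.
      intros x Hx. apply exp_le_compat. replace (x ^ 2) with (x * x) by ring. nra.
    - rewrite (RInt_const (V:=R_CompleteNormedModule)).
      unfold scal; simpl; unfold mult; simpl; ring. }
  assert (Hhalf : exp (1/2) * exp (1/2) <= 3).
  { rewrite <- exp_plus. replace (1/2 + 1/2) with 1 by lra. apply exp_le_3. }
  assert (Hinv : exp (-1/2) * exp (1/2) = 1).
  { rewrite <- exp_plus. replace (-1/2 + 1/2) with 0 by lra. apply exp_0. }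
  assert (0 < exp (1/2)) by apply exp_pos.
  specialize (Hle (-1) ltac:(lra)). nra.
Qed.

Lemma sqrt_2PI_bounds : 0 < sqrt (2 * PI) <= 3.
Proof.
  split.
  - apply sqrt_lt_R0. pose proof PI_RGT_0. lra.
  - rewrite <- (sqrt_square 3) by lra. apply sqrt_le_1_alt. pose proof PI_4. lra.
Qed.

Lemma Phi_gauss_tail a l : gauss_tail a l -> Phi a = l / sqrt (2 * PI).
Proof.
  intros [Hle Hlim].
  destruct sqrt_2PI_bounds as [Hs _].
  assert (Hp : improper_int_minf phi a (l / sqrt (2 * PI))).
  { intros eps He. destruct (Hlim (eps * sqrt (2 * PI))) as [M HM]; [nra|].
    exists (Rmax M (- a)). intros c Hc.
    pose proof (Rmax_l M (- a)). pose proof (Rmax_r M (- a)).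
    assert (pr : Riemann_integrable phi c a).
    { apply continuity_implies_RiemannInt; [lra|]. intros x _.
      apply continuity_pt_filterlim. unfold phi.
      apply (@ex_derive_continuous R_AbsRing R_NormedModule
               (fun x => exp (- (x ^ 2) / 2) / sqrt (2 * PI))).
      auto_derive. lra. }
    exists pr. rewrite <- RInt_Reals.
    replace (RInt phi c a) with (RInt gauss c a / sqrt (2 * PI)).
    2: { rewrite (RInt_ext phi (fun x => scal (/ sqrt (2 * PI)) (gauss x))).
         - rewrite (RInt_scal (V:=R_CompleteNormedModule)) by apply gauss_integrable.
           unfold scal; simpl; unfold mult; simpl. unfold Rdiv. ring.
         - intros x _. unfold scal, phi, gauss; simpl; unfold mult; simpl. unfold Rdiv. ring. }
    specialize (HM c ltac:(lra)).
    replace (RInt gauss c a / sqrt (2 * PI) - l / sqrt (2 * PI))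
      with ((RInt gauss c a - l) / sqrt (2 * PI)) by (field; lra).
    unfold Rdiv. rewrite Rabs_mult, Rabs_inv, (Rabs_pos_eq (sqrt _)) by lra.
    apply (Rmult_lt_reg_r (sqrt (2 * PI))); auto.
    rewrite Rmult_assoc, Rinv_l by lra. lra. }
  apply (improper_int_minf_unique phi a); [|exact Hp].
  unfold Phi. apply epsilon_spec. eauto.
Qed.

(* x - 1 - ln x: the rate function of the Laplace method for the Erlang
   integrand, kappa_max - kappa(t) = n lgap(lam (1+t) / n). *)
Definition lgap (x : R) : R := x - 1 - ln x.

(* lgap is nonnegative, and vanishes only at 1 (from e^y >= 1 + y). *)
Lemma lgap_nonneg x : 0 < x -> 0 <= lgap x.
Proof.
  intros Hx. unfold lgap. pose proof (exp_ineq1_le (ln x)). rewrite exp_ln in *; lra.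
Qed.

Lemma lgap_pos x : 0 < x -> x <> 1 -> 0 < lgap x.
Proof.
  intros Hx H1. unfold lgap.
  assert (Hn : ln x <> 0).
  { intros H0. apply H1. rewrite <- (exp_ln x Hx), H0. apply exp_0. }
  pose proof (exp_ineq1 (ln x) Hn). rewrite exp_ln in *; lra.
Qed.

(* ln x - (x-1) + (x-1)^2/2 is increasing and vanishes at 1. *)
Lemma ln_taylor_sign x : 0 < x -> 0 <= (x - 1) * (ln x - (x - 1) + (x - 1) ^ 2 / 2).
Proof.
  intros Hx.
  apply (increasing_sign (fun y => ln y - (y - 1) + (y - 1) ^ 2 / 2)
           (fun y => (y - 1) ^ 2 / y)); auto; try lra.
  - intros y Hy. auto_derive; [lra|]. field. lra.
  - intros y Hy. apply Rmult_le_pos; [apply pow2_ge_0|]. left; now apply Rinv_0_lt_compat.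
  - cbv beta. rewrite ln_1. field.
Qed.

(* (x - 1/x)/2 - ln x is increasing and vanishes at 1. *)
Lemma ln_mean_sign x : 0 < x -> 0 <= (x - 1) * ((x - / x) / 2 - ln x).
Proof.
  intros Hx.
  apply (increasing_sign (fun y => (y - / y) / 2 - ln y)
           (fun y => (y - 1) ^ 2 / (2 * y ^ 2))); auto; try lra.
  - intros y Hy. auto_derive; [lra|]. field. lra.
  - intros y Hy. apply Rmult_le_pos; [apply pow2_ge_0|].
    left; apply Rinv_0_lt_compat. nra.
  - cbv beta. rewrite ln_1, Rinv_1. field.
Qed.

(* Together: 2 lgap(x) lies between (x-1)^2 and (x-1)^2/x, which we use in
   the following form, with U = |x-1|. *)
Lemma lgap_square_bounds x : 0 < x ->
  Rabs (x - 1) ^ 2 <= 2 * lgap x * (1 + Rabs (x - 1)) ^ 2 /\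
  (Rabs (x - 1) < 1 -> 2 * lgap x * (1 - Rabs (x - 1)) ^ 2 <= Rabs (x - 1) ^ 2).
Proof.
  intros Hx. pose proof (ln_taylor_sign x Hx) as Ht. pose proof (ln_mean_sign x Hx) as Hm.
  pose proof (lgap_nonneg x Hx) as H0. unfold lgap in *.
  destruct (Rle_dec 1 x).
  - rewrite Rabs_pos_eq by lra.
    assert (Hmean : (x - 1) ^ 2 <= 2 * x * (x - 1 - ln x)).
    { destruct (Req_dec x 1) as [-> | Hne]; [rewrite ln_1; lra|].
      assert (0 <= (x - / x) / 2 - ln x) by (apply (Rmult_le_reg_l (x - 1)); lra).
      replace (2 * x * (x - 1 - ln x)) with ((x - 1) ^ 2 + 2 * x * ((x - / x) / 2 - ln x))
        by (field; lra).
      nra. }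
    assert (Htay : x - 1 - ln x <= (x - 1) ^ 2 / 2).
    { destruct (Req_dec x 1) as [-> | Hne]; [rewrite ln_1; lra|].
      assert (0 <= ln x - (x - 1) + (x - 1) ^ 2 / 2) by (apply (Rmult_le_reg_l (x - 1)); lra).
      lra. }
    replace (1 + (x - 1)) with x by ring. split; [nra|].
    intros Hu. assert ((1 - (x - 1)) ^ 2 <= 1) by nra. nra.
  - rewrite Rabs_left by lra. replace (- (x - 1)) with (1 - x) by ring.
    replace (1 - (1 - x)) with x by ring.
    assert (Hneg : forall A, 0 <= (x - 1) * A -> A <= 0).
    { intros A HA. apply Rnot_lt_le. intros HA'. nra. }
    apply Hneg in Ht. apply Hneg in Hm.
    split.
    + assert (1 <= (1 + (1 - x)) ^ 2) by nra. nra.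
    + intros _. replace (2 * (x - 1 - ln x) * x ^ 2)
        with (x * (1 - x) ^ 2 + 2 * x ^ 2 * ((x - / x) / 2 - ln x)) by (field; lra).
      assert (x * (1 - x) ^ 2 <= (1 - x) ^ 2) by (pose proof (pow2_ge_0 (1 - x)); nra).
      assert (0 <= 2 * x ^ 2) by nra. nra.
Qed.

(* The key elementary estimate: S = sqrt(2 lgap x) is within relative error
   |x-1| of |x-1|.  It controls the Jacobian of the Gaussian substitution. *)
Lemma sqrt_lgap_near x : 0 < x ->
  Rabs (sqrt (2 * lgap x) - Rabs (x - 1)) <= Rabs (x - 1) * sqrt (2 * lgap x).
Proof.
  intros Hx. destruct (lgap_square_bounds x Hx) as [Hlo Hhi].
  pose proof (lgap_nonneg x Hx).
  set (S := sqrt (2 * lgap x)) in *. set (U := Rabs (x - 1)) in *.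
  assert (HS : 0 <= S) by apply sqrt_pos.
  assert (HS2 : S ^ 2 = 2 * lgap x) by (apply pow2_sqrt; lra).
  assert (HU : 0 <= U) by apply Rabs_pos.
  assert (U <= S * (1 + U)).
  { apply Rsqr_incr_0_var; [unfold Rsqr; nra | nra]. }
  assert (S - U <= U * S).
  { destruct (Rlt_dec U 1) as [HU1|HU1]; [|nra].
    assert (S * (1 - U) <= U); [|nra].
    apply Rsqr_incr_0_var; [unfold Rsqr; nra | lra]. }
  apply Rabs_le. lra.
Qed.

Section ErlangIntegral.

Variables lam n : R.
Hypothesis lam_pos : 0 < lam.
Hypothesis lam_lt_n : lam < n.

(* The integrand is t e^{-lam t} (1+t)^{n-1} = t/(1+t) e^{kappa(t)}; kappa is
   increasing up to t_max and decreasing afterwards.  weight is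
   e^{kappa}, level is the Gaussian variable w(t), and a_max = level 0 is the
   paper's a. *)
Definition kappa (t : R) : R := - lam * t + n * ln (1 + t).
Definition kappa' (t : R) : R := n / (1 + t) - lam.
Definition t_max : R := n / lam - 1.
Definition kappa_max : R := lam - n - n * ln (lam / n).
Definition weight (t : R) : R := exp (kappa t).
Definition level (t : R) : R := sqrt (2 * (kappa_max - kappa t)).
Definition a_max : R := sqrt (2 * kappa_max).
Definition gam : R := (n - lam) / sqrt n.

Definition erl_density (t : R) : R := t * exp (- lam * t) * Rpower (1 + t) (n - 1).
Definition erl_partial (b : R) : R := RInt erl_density 0 b.

(* The Gaussian approximation of lam * erl_partial t, on the branch
   s * level t (s = 1 before t_max, s = -1 after), and its defect. *)
Definition approx (s t : R) : R :=
  1 - weight t + gam * exp kappa_max * RInt gauss (s * level t) a_max.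
Definition defect (s t : R) : R := lam * erl_partial t - approx s t.

Lemma kappa'_eq t : -1 < t -> kappa' t = lam * (t_max - t) / (1 + t).
Proof. intros Ht. unfold kappa', t_max. field. lra. Qed.

Lemma t_max_pos : 0 < t_max.
Proof.
  unfold t_max. assert (1 < n / lam); [|lra].
  apply (Rmult_lt_reg_r lam); [lra|]. unfold Rdiv. rewrite Rmult_assoc, Rinv_l; lra.
Qed.

Lemma kappa_gap t : -1 < t -> kappa_max - kappa t = n * lgap (lam / n * (1 + t)).
Proof.
  intros Ht. unfold kappa_max, kappa, lgap.
  rewrite ln_mult; [field; lra | apply Rdiv_lt_0_compat | ]; lra.
Qed.

Lemma kappa_gap_nonneg t : -1 < t -> 0 <= kappa_max - kappa t.
Proof.
  intros Ht. rewrite kappa_gap by auto. apply Rmult_le_pos; [lra|].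
  apply lgap_nonneg, Rmult_lt_0_compat; [apply Rdiv_lt_0_compat|]; lra.
Qed.

Lemma kappa_gap_pos t : -1 < t -> t <> t_max -> 0 < kappa_max - kappa t.
Proof.
  intros Ht Htm. rewrite kappa_gap by auto. apply Rmult_lt_0_compat; [lra|].
  apply lgap_pos; [apply Rmult_lt_0_compat; [apply Rdiv_lt_0_compat|]; lra|].
  intros H. apply Htm. unfold t_max.
  replace (n / lam) with (n / lam * (lam / n * (1 + t))) by (rewrite H; ring).
  field. lra.
Qed.

Lemma kappa_0 : kappa 0 = 0.
Proof. unfold kappa. rewrite Rplus_0_r, ln_1. ring. Qed.

Lemma kappa_max_nonneg : 0 <= kappa_max.
Proof. pose proof (kappa_gap_nonneg 0). rewrite kappa_0 in *. lra. Qed.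

Lemma weight_0 : weight 0 = 1.
Proof. unfold weight. rewrite kappa_0. apply exp_0. Qed.

Lemma weight_le t : -1 < t -> weight t <= exp kappa_max.
Proof. intros Ht. apply exp_le_compat. pose proof (kappa_gap_nonneg t Ht). lra. Qed.

Lemma a_max_eq : a_max = level 0.
Proof. unfold a_max, level. now rewrite kappa_0, Rminus_0_r. Qed.

Lemma level_t_max : level t_max = 0.
Proof.
  unfold level, kappa, kappa_max, t_max.
  replace (1 + (n / lam - 1)) with (/ (lam / n)) by (field; lra).
  rewrite ln_Rinv by (apply Rdiv_lt_0_compat; lra).
  replace (2 * _) with 0 by (field; lra). apply sqrt_0.
Qed.

Lemma gauss_level t : -1 < t -> gauss (level t) * exp kappa_max = weight t.
Proof.
  intros Ht. unfold gauss, level, weight. rewrite <- exp_plus. f_equal.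
  pose proof (kappa_gap_nonneg t Ht). rewrite pow2_sqrt by lra. field.
Qed.

Lemma erl_density_eq t : -1 < t -> erl_density t = t * weight t / (1 + t).
Proof.
  intros Ht. unfold erl_density, weight, kappa, Rpower.
  replace (- lam * t + n * ln (1 + t))
    with ((- lam * t + (n - 1) * ln (1 + t)) + ln (1 + t)) by ring.
  rewrite exp_plus, exp_plus, exp_ln by lra. field. lra.
Qed.

Lemma erl_density_continuous t : -1 < t -> continuous erl_density t.
Proof.
  intros Ht. apply (@ex_derive_continuous R_AbsRing R_NormedModule).
  unfold erl_density, Rpower. auto_derive. lra.
Qed.

Lemma erl_density_integrable c d : -1 < c -> -1 < d -> ex_RInt erl_density c d.
Proof.
  intros Hc Hd. apply (@ex_RInt_continuous R_CompleteNormedModule).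
  intros z Hz. apply erl_density_continuous.
  pose proof (Rmin_glb_lt c d (-1) Hc Hd). lra.
Qed.

Lemma erl_partial_derive b : -1 < b -> is_derive erl_partial b (erl_density b).
Proof.
  intros Hb. apply (is_derive_RInt erl_density erl_partial 0 b).
  - assert (He : 0 < (1 + b) / 2) by lra.
    exists (mkposreal _ He). intros y Hy. change (Rabs (y - b) < (1 + b) / 2) in Hy.
    apply Rabs_lt_between in Hy.
    apply (RInt_correct (V:=R_CompleteNormedModule)), erl_density_integrable; lra.
  - now apply erl_density_continuous.
Qed.

Lemma erl_partial_mono x y : 0 <= x <= y -> erl_partial x <= erl_partial y.
Proof.
  intros Hxy. unfold erl_partial.
  rewrite <- (RInt_Chasles (V:=R_CompleteNormedModule) erl_density 0 x y)
    by (apply erl_density_integrable; lra).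
  assert (0 <= RInt erl_density x y); [|unfold plus; simpl; lra].
  apply RInt_ge_0; [lra | apply erl_density_integrable; lra|].
  intros t Ht. rewrite erl_density_eq by lra.
  apply Rmult_le_pos; [apply Rmult_le_pos; [lra | left; apply exp_pos]|].
  left; apply Rinv_0_lt_compat; lra.
Qed.

(* Derivatives of the weight and of the Gaussian level (the latter away from
   t_max, where w vanishes). *)
Lemma weight_derive t : -1 < t -> is_derive weight t (kappa' t * weight t).
Proof. intros Ht. unfold weight, kappa, kappa'. auto_derive; [lra|]. field. lra. Qed.

Lemma level_derive t : -1 < t -> t <> t_max -> is_derive level t (- kappa' t / level t).
Proof.
  intros Ht Htm. pose proof (kappa_gap_pos t Ht Htm) as Hp.
  assert (0 < level t) by (apply sqrt_lt_R0; lra).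
  unfold level, kappa', kappa_max, kappa in *. auto_derive.
  - repeat split; lra.
  - unfold Rminus in *. field. split; lra.
Qed.

Lemma level_continuous t : -1 < t -> continuity_pt level t.
Proof.
  intros Ht. apply continuity_pt_filterlim. unfold level.
  apply (continuous_sqrt_comp (fun t => 2 * (kappa_max - kappa t))).
  apply (@ex_derive_continuous R_AbsRing R_NormedModule).
  unfold kappa. auto_derive. lra.
Qed.

(* The Jacobian estimate: on the branch where s kappa' = |kappa'|, the
   derivative of the defect (see defect_derive) is at most the weight times
   (gam/sqrt n) |kappa'| in absolute value.  Writing
   x = lam (1+t)/n, both sides are multiples of (n - lam)/(1+t) and the
   inequality reduces to sqrt_lgap_near. *)
Lemma defect_slope_bound t : -1 < t -> t <> t_max ->
  Rabs ((n - lam) / (1 + t) - gam * Rabs (kappa' t) / level t)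
    <= gam / sqrt n * Rabs (kappa' t).
Proof.
  intros Ht Htm.
  set (x := lam / n * (1 + t)).
  assert (Hx : 0 < x) by (apply Rmult_lt_0_compat; [apply Rdiv_lt_0_compat|]; lra).
  pose proof (kappa_gap_pos t Ht Htm) as Hgap. rewrite kappa_gap in Hgap by auto. fold x in Hgap.
  assert (0 < lgap x) by (apply (Rmult_lt_reg_l n); lra).
  set (S := sqrt (2 * lgap x)). set (U := Rabs (x - 1)).
  assert (HS : 0 < S) by (apply sqrt_lt_R0; lra).
  assert (Hsn : 0 < sqrt n) by (apply sqrt_lt_R0; lra).
  assert (Hsn2 : sqrt n ^ 2 = n) by (apply pow2_sqrt; lra).
  assert (Hlevel : level t = sqrt n * S).
  { unfold level, S. rewrite kappa_gap by auto. fold x.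
    rewrite <- sqrt_mult by lra. f_equal. ring. }
  assert (Hkappa : Rabs (kappa' t) = n / (1 + t) * U).
  { replace (kappa' t) with (n / (1 + t) * - (x - 1)) by (unfold kappa', x; field; lra).
    rewrite Rabs_mult, Rabs_Ropp, Rabs_pos_eq; [reflexivity|].
    apply Rlt_le, Rdiv_lt_0_compat; lra. }
  set (m := (n - lam) / (1 + t)).
  assert (Hm : 0 < m) by (apply Rdiv_lt_0_compat; lra).
  rewrite Hkappa, Hlevel. unfold gam.
  set (sn := sqrt n) in *. clearbody sn.
  replace (m - (n - lam) / sn * (n / (1 + t) * U) / (sn * S))
    with (m * ((S - U) / S)) by (unfold m; rewrite <- Hsn2; field; repeat split; lra).
  replace ((n - lam) / sn / sn * (n / (1 + t) * U))
    with (m * U) by (unfold m; rewrite <- Hsn2; field; repeat split; lra).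
  rewrite Rabs_mult, Rabs_pos_eq by lra. apply Rmult_le_compat_l; [lra|].
  unfold Rdiv. rewrite Rabs_mult, Rabs_inv, (Rabs_pos_eq S) by lra.
  apply (Rmult_le_reg_r S); [lra|]. rewrite Rmult_assoc, Rinv_l by lra.
  pose proof (sqrt_lgap_near x Hx) as Hnear. change (Rabs (S - U) <= U * S) in Hnear. lra.
Qed.

(* The derivative of the defect on either branch; the terms in kappa'
   coming from -weight and from lam * t/(1+t) recombine into (n-lam)/(1+t). *)
Lemma defect_derive s t : s * s = 1 -> -1 < t -> t <> t_max ->
  is_derive (defect s) t
    (weight t * ((n - lam) / (1 + t) - gam * (s * kappa' t) / level t)).
Proof.
  intros Hs Ht Htm.
  assert (HL : 0 < level t) by (apply sqrt_lt_R0; pose proof (kappa_gap_pos t Ht Htm); lra).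
  assert (Hint : is_derive (fun t => RInt gauss (s * level t) a_max) t
                   (s * (- kappa' t / level t) * - gauss (s * level t))).
  { apply (is_derive_comp (fun c => RInt gauss c a_max) (fun t => s * level t)).
    - apply gauss_int_derive.
    - apply (is_derive_scal level). now apply level_derive. }
  unfold defect, approx.
  evar (d : R).
  replace (weight t * ((n - lam) / (1 + t) - gam * (s * kappa' t) / level t)) with d.
  - apply (is_derive_minus (fun t => lam * erl_partial t)).
    + apply (is_derive_scal erl_partial). now apply erl_partial_derive.
    + apply (is_derive_plus (fun t => 1 - weight t)).
      * apply (is_derive_minus (fun _ => 1) weight); [apply is_derive_const|].
        now apply weight_derive.
      * apply (is_derive_scal (fun t => RInt gauss (s * level t) a_max)). exact Hint.
  - unfold d, minus, plus, opp, zero, scal; simpl; unfold mult; simpl.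
    rewrite erl_density_eq, gauss_sign by auto.
    rewrite <- (gauss_level t Ht). unfold kappa'. field. repeat split; lra.
Qed.

Lemma gam_pos : 0 < gam.
Proof. unfold gam. apply Rdiv_lt_0_compat; [lra|]. apply sqrt_lt_R0. lra. Qed.

Lemma gam_slope_nonneg : 0 <= gam / sqrt n.
Proof. apply Rlt_le, Rdiv_lt_0_compat; [apply gam_pos | apply sqrt_lt_R0; lra]. Qed.

(* The defect is continuous on (-1,oo), including at t_max. *)
Lemma defect_continuous s t : -1 < t -> continuity_pt (defect s) t.
Proof.
  intros Ht. unfold defect, approx.
  apply continuity_pt_minus; [apply continuity_pt_scal|apply continuity_pt_plus].
  - eapply continuity_of_derive. now apply erl_partial_derive.
  - apply continuity_pt_minus; [apply continuity_pt_const; now intros ? ?|].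
    eapply continuity_of_derive. now apply weight_derive.
  - apply continuity_pt_scal.
    apply (continuity_pt_comp (fun t => s * level t) (fun c => RInt gauss c a_max)).
    + apply continuity_pt_scal. now apply level_continuous.
    + eapply continuity_of_derive. apply gauss_int_derive.
Qed.

Lemma defect_increment s u v : s * s = 1 -> -1 < u <= v ->
  (forall t, u < t < v -> t <> t_max /\ 0 <= s * kappa' t) ->
  Rabs (defect s v - defect s u) <= s * (gam / sqrt n) * (weight v - weight u).
Proof.
  intros Hs Huv Hsign. pose proof gam_slope_nonneg as Hc.
  replace (s * (gam / sqrt n) * (weight v - weight u))
    with (s * (gam / sqrt n) * weight v - s * (gam / sqrt n) * weight u) by ring.
  apply (dominated_increment (defect s) (fun t => s * (gam / sqrt n) * weight t)
    (fun t => weight t * ((n - lam) / (1 + t) - gam * (s * kappa' t) / level t))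
    (fun t => s * (gam / sqrt n) * (kappa' t * weight t))); try lra.
  - intros t Ht. destruct (Hsign t Ht). apply defect_derive; auto; lra.
  - intros t Ht. apply (is_derive_scal weight). apply weight_derive. lra.
  - intros t Ht. destruct (Hsign t Ht) as [Htm Hk].
    assert (Hs1 : Rabs s = 1) by (unfold Rabs; destruct (Rcase_abs s); nra).
    assert (Habs : Rabs (kappa' t) = s * kappa' t).
    { rewrite <- (Rabs_pos_eq (s * kappa' t)), Rabs_mult, Hs1 by lra. ring. }
    pose proof (defect_slope_bound t ltac:(lra) Htm) as Hb. rewrite Habs in Hb.
    assert (0 < weight t) by apply exp_pos.
    rewrite Rabs_mult, (Rabs_pos_eq (weight t)) by lra.
    replace (s * (gam / sqrt n) * (kappa' t * weight t))
      with (weight t * (gam / sqrt n * (s * kappa' t))) by ring.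
    apply Rmult_le_compat_l; lra.
  - intros t Ht. apply defect_continuous. lra.
  - intros t Ht. apply continuity_pt_scal. eapply continuity_of_derive, weight_derive. lra.
Qed.

(* Past t_max the defect is at most 2 (gam/sqrt n) e^{kappa_max}: it vanishes at
   0, grows by at most (gam/sqrt n)(e^{kappa_max} - 1) up to t_max, where the
   two branches agree, and by at most (gam/sqrt n) e^{kappa_max} afterwards. *)
Lemma defect_far b : t_max <= b -> Rabs (defect (-1) b) <= 2 * (gam / sqrt n * exp kappa_max).
Proof.
  intros Hb. pose proof t_max_pos. pose proof gam_slope_nonneg.
  assert (Hleft : Rabs (defect 1 t_max - defect 1 0)
                    <= 1 * (gam / sqrt n) * (weight t_max - weight 0)).
  { apply defect_increment; try lra. intros t Ht. split; [lra|].
    rewrite kappa'_eq, Rmult_1_l by lra.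
    apply Rmult_le_pos; [nra | left; apply Rinv_0_lt_compat; lra]. }
  assert (Hright : Rabs (defect (-1) b - defect (-1) t_max)
                     <= -1 * (gam / sqrt n) * (weight b - weight t_max)).
  { apply defect_increment; try lra. intros t Ht. split; [lra|].
    rewrite kappa'_eq by lra.
    replace (-1 * (lam * (t_max - t) / (1 + t))) with (lam * (t - t_max) / (1 + t))
      by (field; lra).
    apply Rmult_le_pos; [nra | left; apply Rinv_0_lt_compat; lra]. }
  assert (Hjoin : defect 1 t_max = defect (-1) t_max).
  { unfold defect, approx. now rewrite level_t_max, !Rmult_0_r. }
  assert (Hstart : defect 1 0 = 0).
  { unfold defect, approx, erl_partial.
    rewrite Rmult_1_l, <- a_max_eq, !(RInt_point (V:=R_CompleteNormedModule)), weight_0.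
    unfold zero; simpl. ring. }
  rewrite Hjoin, Hstart, Rminus_0_r in Hleft.
  pose proof (weight_le t_max ltac:(lra)). pose proof (exp_pos (kappa b)).
  rewrite weight_0 in Hleft. fold (weight b) in *.
  replace (defect (-1) b) with ((defect (-1) b - defect (-1) t_max) + defect (-1) t_max) by ring.
  eapply Rle_trans; [apply Rabs_triang|]. nra.
Qed.

Lemma far_point K : 0 <= K -> exists b, t_max <= b /\ kappa b <= - K.
Proof.
  intros HK.
  set (s := Rmax 1 (Rmax ((2 * n + K + lam) / lam) (t_max + 1))).
  assert (Hs1 : 1 <= s) by apply Rmax_l.
  assert (Hs2 : (2 * n + K + lam) / lam <= s) by (eapply Rle_trans; [apply Rmax_l|apply Rmax_r]).
  assert (Hs3 : t_max + 1 <= s) by (eapply Rle_trans; [apply Rmax_r|apply Rmax_r]).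
  exists (s * s - 1). split; [nra|].
  unfold kappa. replace (1 + (s * s - 1)) with (s * s) by ring.
  rewrite ln_mult by lra.
  assert (Hln : ln s <= s - 1) by (pose proof (exp_ineq1_le (ln s)); rewrite exp_ln in *; lra).
  assert (Hls : 2 * n + K + lam <= lam * s).
  { apply (Rmult_le_compat_l lam) in Hs2; [|lra].
    replace (lam * ((2 * n + K + lam) / lam)) with (2 * n + K + lam) in Hs2 by (field; lra). lra. }
  nra.
Qed.

(* Uniform upper bound on the partial integrals (by monotonicity it suffices
   to look beyond t_max, where the Gaussian integral is at most l). *)
Lemma erl_partial_upper l b : gauss_tail a_max l -> 0 <= b ->
  lam * erl_partial b
    <= 1 + gam * exp kappa_max * l + 2 * (gam / sqrt n * exp kappa_max).
Proof.
  intros [Htail _] Hb. pose proof t_max_pos.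
  set (b' := Rmax b t_max).
  assert (b <= b') by apply Rmax_l. assert (t_max <= b') by apply Rmax_r.
  assert (Hmono : erl_partial b <= erl_partial b') by (apply erl_partial_mono; lra).
  pose proof (defect_far b' ltac:(lra)) as Hfar. apply Rabs_le_between in Hfar.
  assert (Hint : RInt gauss (-1 * level b') a_max <= l).
  { apply Htail. pose proof (sqrt_pos (2 * (kappa_max - kappa b'))).
    pose proof (sqrt_pos (2 * kappa_max)). unfold level, a_max in *. lra. }
  assert (0 <= gam * exp kappa_max)
    by (apply Rmult_le_pos; [apply Rlt_le, gam_pos | left; apply exp_pos]).
  pose proof (exp_pos (kappa b')). unfold defect, approx, weight in *. nra.
Qed.

(* Far out, the weight is negligible and -level t is far in the Gaussian
   tail, so the approximation gets arbitrarily close to 1 + gam e^{kappa_max} l. *)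
Lemma approx_far_lower l eta : gauss_tail a_max l -> eta > 0 ->
  exists b, t_max <= b /\ 1 + gam * exp kappa_max * l - eta <= approx (-1) b.
Proof.
  intros [_ Hlim] Heta.
  set (C := gam * exp kappa_max).
  assert (HC : 0 <= C) by (apply Rmult_le_pos; [apply Rlt_le, gam_pos | left; apply exp_pos]).
  destruct (Hlim (eta / (2 * (C + 1)))) as [M HM]; [apply Rdiv_lt_0_compat; lra|].
  destruct (far_point (Rabs (ln (eta / 2)) + M * M + 1)) as [b [Hb Hk]].
  { pose proof (Rabs_pos (ln (eta / 2))). nra. }
  exists b. split; auto.
  pose proof t_max_pos. pose proof kappa_max_nonneg.
  assert (Hw : weight b <= eta / 2).
  { unfold weight. rewrite <- (exp_ln (eta / 2)) by lra. apply exp_le_compat.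
    pose proof (Rle_abs (- ln (eta / 2))). rewrite Rabs_Ropp in *. nra. }
  assert (HL : M < level b).
  { pose proof (sqrt_pos (2 * (kappa_max - kappa b))) as HL0. fold (level b) in HL0.
    destruct (Rlt_dec M 0); [lra|].
    apply Rnot_le_lt. intros HML.
    assert (Hsq : level b * level b = 2 * (kappa_max - kappa b)).
    { apply sqrt_sqrt. pose proof (kappa_gap_nonneg b ltac:(lra)). lra. }
    pose proof (Rabs_pos (ln (eta / 2))). nra. }
  specialize (HM (-1 * level b) ltac:(lra)). apply Rabs_lt_between in HM.
  assert (C * (eta / (2 * (C + 1))) <= eta / 2).
  { replace (C * (eta / (2 * (C + 1)))) with (eta / 2 * (C / (C + 1))) by (field; lra).
    assert (C / (C + 1) <= 1).
    { apply (Rmult_le_reg_r (C + 1)); [lra|].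
      replace (C / (C + 1) * (C + 1)) with C by (field; lra). lra. }
    nra. }
  unfold approx. fold C. nra.
Qed.

Lemma erlang_integral_approx l : gauss_tail a_max l ->
  Rabs (lam * erlang_integral n lam - (1 + gam * exp kappa_max * l))
    <= 2 * (gam / sqrt n * exp kappa_max).
Proof.
  intros Hl.
  set (Z := 1 + gam * exp kappa_max * l). set (err := 2 * (gam / sqrt n * exp kappa_max)).
  destruct (monotone_bounded_limit erl_partial 0 ((Z + err) / lam)) as [I [Hsup [Hle Hlim]]].
  - intros x y Hxy. apply erl_partial_mono. lra.
  - intros x Hx. apply (Rmult_le_reg_l lam); [lra|].
    replace (lam * ((Z + err) / lam)) with (Z + err) by (field; lra).
    now apply erl_partial_upper.
  - assert (HI : erlang_integral n lam = I).
    { assert (Himp : improper_int_0_inf erl_density I).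
      { intros eps He. destruct (Hlim eps He) as [M HM]. exists (Rmax M 0). intros b Hb.
        pose proof (Rmax_l M 0). pose proof (Rmax_r M 0).
        assert (pr : Riemann_integrable erl_density 0 b).
        { apply continuity_implies_RiemannInt; [lra|]. intros x Hx.
          apply continuity_pt_filterlim, erl_density_continuous. lra. }
        exists pr. rewrite <- RInt_Reals. apply HM. lra. }
      apply (improper_int_0_inf_unique erl_density); [|exact Himp].
      unfold erlang_integral. apply epsilon_spec. eauto. }
    rewrite HI. apply Rabs_le. split.
    + apply Rnot_lt_le. intros Hlt.
      destruct (approx_far_lower l ((Z - err - lam * I) / 2) Hl ltac:(lra)) as [b [Hb Hb2]].
      pose proof t_max_pos.
      pose proof (defect_far b Hb) as Hfar. apply Rabs_le_between in Hfar.
      assert (erl_partial b <= I) by (apply Hsup; lra).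
      unfold defect in Hfar. fold Z err in Hb2, Hfar. nra.
    + apply (Rmult_le_compat_l lam) in Hle; [|lra].
      replace (lam * ((Z + err) / lam)) with (Z + err) in Hle by (field; lra). lra.
Qed.

End ErlangIntegral.

Lemma Rmin_1_near u v : v <= 1 -> Rabs (Rmin 1 u - v) <= Rabs (u - v).
Proof.
  intros Hv. unfold Rmin. destruct (Rle_dec 1 u); [|lra].
  rewrite !Rabs_pos_eq by lra. lra.
Qed.

Lemma inv_near sn d X : 8 <= sn -> 0 <= d -> Rabs (X - (1 + d)) <= 4 * d / sn ->
  Rabs (/ X - / (1 + d)) <= 8 / sn.
Proof.
  intros Hsn Hd HX. apply Rabs_le_between in HX.
  assert (Hq : 4 * d / sn <= (1 + d) / 2).
  { apply (Rmult_le_reg_r sn); [lra|]. unfold Rdiv. rewrite Rmult_assoc, Rinv_l; nra. }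
  assert (HX0 : (1 + d) / 2 <= X) by lra.
  replace (/ X - / (1 + d)) with ((1 + d - X) / (X * (1 + d))) by (field; lra).
  unfold Rdiv. rewrite Rabs_mult, Rabs_inv, (Rabs_pos_eq (X * (1 + d))) by nra.
  apply (Rmult_le_reg_r (X * (1 + d))); [nra|].
  rewrite Rmult_assoc, Rinv_l, Rmult_1_r by nra.
  apply Rle_trans with (4 * d / sn); [apply Rabs_le; lra|].
  assert (0 < / sn) by (apply Rinv_0_lt_compat; lra).
  assert (4 * d <= 8 * (X * (1 + d))) by nra.
  unfold Rdiv. nra.
Qed.

Lemma perturbed_denominators sn g e l c2 :
  8 <= sn -> 0 <= g -> 1 <= e -> 1/2 <= l -> 0 < c2 <= 3 ->
  Rabs (1 + g * e * l - g / (3 * sn) - (1 + g * e * l)) <= 4 * (g * e * l) / sn /\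
  Rabs (1 + g * e * l - g / (3 * sn) + g * (c2 * e / (12 * (sn * sn) - 1)) - (1 + g * e * l))
    <= 4 * (g * e * l) / sn.
Proof.
  intros Hsn Hg He Hl Hc. set (d := g * e * l).
  assert (Hd : g <= 2 * d).
  { assert (1 <= 2 * e * l) by nra. unfold d. nra. }
  assert (Hisn : 0 < / sn) by (apply Rinv_0_lt_compat; lra).
  assert (Hshift : 0 <= g / (3 * sn) <= 2 * d / (3 * sn)).
  { assert (0 < / (3 * sn)) by (apply Rinv_0_lt_compat; lra).
    unfold Rdiv. split; [apply Rmult_le_pos|apply Rmult_le_compat_r]; lra. }
  assert (H3 : 2 * d / (3 * sn) <= 2 * d / sn) by (unfold Rdiv; rewrite Rinv_mult; nra).
  set (E2 := g * (c2 * e / (12 * (sn * sn) - 1))).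
  assert (HE2 : 0 <= E2 <= 2 * d / sn).
  { assert (Hden : 3 * sn <= 12 * (sn * sn) - 1) by nra.
    assert (E2 * (12 * (sn * sn) - 1) = g * e * c2) by (unfold E2; field; nra).
    assert (0 <= g * e * c2) by (apply Rmult_le_pos; [apply Rmult_le_pos|]; lra).
    assert (0 <= E2) by (apply (Rmult_le_reg_r (12 * (sn * sn) - 1)); nra).
    split; [lra|]. apply (Rmult_le_reg_r (12 * (sn * sn) - 1)); [nra|].
    apply Rle_trans with (6 * d); [unfold d in *; nra|].
    replace (2 * d / sn * (12 * (sn * sn) - 1)) with (2 * d * ((12 * (sn * sn) - 1) / sn))
      by (field; lra).
    assert (3 <= (12 * (sn * sn) - 1) / sn).
    { apply (Rmult_le_reg_r sn); [lra|]. unfold Rdiv. rewrite Rmult_assoc, Rinv_l; lra. }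
    assert (0 <= d) by lra. nra. }
  split; apply Rabs_le; lra.
Qed.

Lemma reciprocal_gaps sn g e l c2 X :
  8 <= sn -> 0 <= g -> 1 <= e -> 1/2 <= l -> 0 < c2 <= 3 ->
  Rabs (X - (1 + g * e * l)) <= 2 * (g / sn * e) ->
  Rabs (Rmin 1 (/ X) - / (1 + g * e * l - g / (3 * sn) + g * (c2 * e / (12 * (sn * sn) - 1))))
    <= 16 / sn /\
  Rabs (/ (1 + g * e * l - g / (3 * sn)) - Rmin 1 (/ X)) <= 16 / sn.
Proof.
  intros Hsn Hg He Hl Hc HX.
  destruct (perturbed_denominators sn g e l c2 Hsn Hg He Hl Hc) as [HY HZ].
  set (d := g * e * l) in *.
  set (Y := 1 + d - g / (3 * sn)) in *.
  set (Z := Y + g * (c2 * e / (12 * (sn * sn) - 1))) in *.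
  assert (Hd : 0 <= d) by (unfold d; apply Rmult_le_pos; [apply Rmult_le_pos|]; lra).
  assert (HXd : Rabs (X - (1 + d)) <= 4 * d / sn).
  { eapply Rle_trans; [exact HX|].
    replace (2 * (g / sn * e)) with (g * e / sn * 2) by (field; lra).
    replace (4 * d / sn) with (g * e / sn * (4 * l)) by (unfold d; field; lra).
    apply Rmult_le_compat_l; [|lra].
    unfold Rdiv. apply Rmult_le_pos; [apply Rmult_le_pos | left; apply Rinv_0_lt_compat]; lra. }
  pose proof (inv_near sn d X Hsn Hd HXd) as HXn.
  pose proof (inv_near sn d Y Hsn Hd HY) as HYn.
  pose proof (inv_near sn d Z Hsn Hd HZ) as HZn.
  assert (Hinv1 : / (1 + d) <= 1) by (rewrite <- Rinv_1; apply Rinv_le_contravar; lra).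
  pose proof (Rmin_1_near (/ X) (/ (1 + d)) Hinv1) as Hmin.
  assert (8 / sn + 8 / sn = 16 / sn) by (field; lra).
  split.
  - replace (Rmin 1 (/ X) - / Z) with ((Rmin 1 (/ X) - / (1 + d)) - (/ Z - / (1 + d))) by ring.
    eapply Rle_trans; [apply Rabs_triang|]. rewrite Rabs_Ropp. lra.
  - replace (/ Y - Rmin 1 (/ X)) with ((/ Y - / (1 + d)) - (Rmin 1 (/ X) - / (1 + d))) by ring.
    eapply Rle_trans; [apply Rabs_triang|]. rewrite Rabs_Ropp. lra.
Qed.

(* The paper's bounds in normal form: Phi(a)/phi(a) = e^{kappa_max} l and
   rho = 1 - gam/sqrt n. *)
Lemma UB_LB_normal_form beta lam l : 0 < beta -> 1 <= lam ->
  gauss_tail (a_max lam (n_of beta lam)) l ->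
  let n := n_of beta lam in let g := gam lam n in let e := exp (kappa_max lam n) in
  UB beta lam = / (1 + g * e * l - g / (3 * sqrt n)) /\
  LB beta lam = / (1 + g * e * l - g / (3 * sqrt n)
                   + g * (sqrt (2 * PI) * e / (12 * (sqrt n * sqrt n) - 1))).
Proof.
  intros Hb Hlam Hp n g e. fold n in Hp.
  set (sn := sqrt n).
  assert (Hl : 0 < lam < n) by (unfold n, n_of; pose proof (sqrt_lt_R0 lam); nra).
  assert (Hsn : 0 < sn) by (apply sqrt_lt_R0; lra).
  assert (Hsn2 : sn * sn = n) by (apply sqrt_sqrt; lra).
  pose proof (kappa_max_nonneg lam n (proj1 Hl) (proj2 Hl)).
  assert (He : 1 <= e) by (unfold e; rewrite <- exp_0; now apply exp_le_compat).
  destruct sqrt_2PI_bounds. set (c2 := sqrt (2 * PI)) in *.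
  assert (Hphi : phi (a_max lam n) = / (e * c2)).
  { unfold phi, a_max. rewrite pow2_sqrt by lra.
    replace (- (2 * kappa_max lam n) / 2) with (- kappa_max lam n) by field.
    rewrite exp_Ropp. fold e c2. field. lra. }
  assert (Ha : a_of beta lam = a_max lam n).
  { unfold a_of, a_max, rho_of, kappa_max. fold n. f_equal. field. lra. }
  assert (Hrho : rho_of beta lam = 1 - g / sn).
  { unfold rho_of, g, gam. fold n sn. rewrite <- Hsn2. field. lra. }
  unfold UB, LB. rewrite Ha, (Phi_gauss_tail _ l Hp), Hphi, Hrho. fold n sn c2.
  change (gamma_of beta lam) with g. rewrite <- Hsn2.
  split; f_equal; field; repeat split; nra.
Qed.

Lemma erlang_C_bounds beta lam : 0 < beta -> 64 <= lam ->
  Rabs (alpha_tilde beta lam - LB beta lam) <= 16 / sqrt lam /\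
  Rabs (UB beta lam - alpha_tilde beta lam) <= 16 / sqrt lam.
Proof.
  intros Hb Hlam.
  destruct (gauss_tail_exists (a_max lam (n_of beta lam))) as [l Hp].
  destruct (UB_LB_normal_form beta lam l Hb ltac:(lra) Hp) as [HUB HLB].
  set (n := n_of beta lam) in *. set (sn := sqrt n) in *.
  assert (Hl : 0 < lam < n) by (unfold n, n_of; pose proof (sqrt_lt_R0 lam); nra).
  assert (Hsn : 8 <= sn) by (rewrite <- (sqrt_square 8) by lra; apply sqrt_le_1_alt; lra).
  pose proof (kappa_max_nonneg lam n (proj1 Hl) (proj2 Hl)).
  assert (He : 1 <= exp (kappa_max lam n)) by (rewrite <- exp_0; now apply exp_le_compat).
  pose proof (gam_pos lam n (proj1 Hl) (proj2 Hl)).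
  pose proof (erlang_integral_approx lam n (proj1 Hl) (proj2 Hl) l Hp) as HX.
  destruct (reciprocal_gaps sn (gam lam n) (exp (kappa_max lam n)) l (sqrt (2 * PI)) _ Hsn
              ltac:(lra) He (gauss_tail_ge_half _ l (sqrt_pos _) Hp) sqrt_2PI_bounds HX)
    as [HLB_gap HUB_gap].
  assert (16 / sn <= 16 / sqrt lam).
  { apply Rmult_le_compat_l; [lra|]. apply Rinv_le_contravar; [apply sqrt_lt_R0; lra|].
    apply sqrt_le_1_alt. lra. }
  change (alpha_tilde beta lam) with (Rmin 1 (/ (lam * erlang_integral n lam))).
  rewrite HUB, HLB. split; lra.
Qed.

Lemma uniform_sup_limit_zero_of_rate (f : R -> R -> R) C L0 : 0 < C ->
  (forall beta lam, 0 < beta -> L0 <= lam -> Rabs (f beta lam) <= C / sqrt lam) ->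
  uniform_sup_limit_zero f.
Proof.
  intros HC Hf eps Heps. exists (Rmax L0 ((C / eps) ^ 2)). intros lam Hlam.
  pose proof (Rmax_l L0 ((C / eps) ^ 2)). pose proof (Rmax_r L0 ((C / eps) ^ 2)).
  assert (HCe : 0 < C / eps) by (apply Rdiv_lt_0_compat; lra).
  assert (Hs : C / eps < sqrt lam).
  { rewrite <- (sqrt_pow2 (C / eps)) by lra. apply sqrt_lt_1_alt. split; [nra | lra]. }
  assert (Hrate : C / sqrt lam <= eps).
  { assert (0 < sqrt lam) by lra. apply (Rmult_lt_compat_l eps) in Hs; [|lra].
    replace (eps * (C / eps)) with C in Hs by (field; lra).
    apply (Rmult_le_reg_r (sqrt lam)); [lra|]. unfold Rdiv.
    rewrite Rmult_assoc, Rinv_l, Rmult_1_r by lra. lra. }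
  assert (Hall : forall beta, 0 < beta -> Rabs (f beta lam) <= eps)
    by (intros beta Hb; eapply Rle_trans; [apply Hf|]; lra).
  split.
  - intros beta Hb. pose proof (Hall beta Hb). pose proof (Rle_abs (f beta lam)). lra.
  - exists 1. split; [lra|]. pose proof (Hall 1 ltac:(lra)) as H1. apply Rabs_le_between in H1. lra.
Qed.

Theorem theorem3 :
  uniform_sup_limit_zero (fun beta lam => alpha_tilde beta lam - LB beta lam) /\
  uniform_sup_limit_zero (fun beta lam => UB beta lam - alpha_tilde beta lam).
Proof.
  split; apply (uniform_sup_limit_zero_of_rate _ 16 64); try lra;
    intros beta lam Hb Hlam; apply (erlang_C_bounds beta lam Hb Hlam).
Qed.
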